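(* Let $T$ be a tree on $n\geq 4$ vertices. Then the node reliability polynomial $\mathrm{nRel}(T;p)$ has at least one point of inflection in $(0,1)$ (a point in $(0,1)$ at which the second derivative changes sign).
   Context: For a graph $G$ on $n$ vertices, a connected set is a nonempty vertex subset $C$ such that the induced subgraph $G[C]$ is connected. The node reliability of $G$ is the polynomial \[ \mathrm{nRel}(G;p)=\sum_{C}p^{|C|}(1-p)^{n-|C|}, \] the sum over all connected sets $C$ of $G$. *)

From HB Require Import structures.
From mathcomp Require Import all_boot all_order all_algebra.
From mathcomp Require Import reals.
Set Implicit Arguments. Unset Strict Implicit. Unset Printing Implicit Defensive.
Import Order.TTheory GRing.Theory Num.Theory.

Definition simple_graph (T : finType) (e : rel T) : Prop :=
  symmetric e /\ irreflexive e.

Definition graph_connected (T : finType) (e : rel T) : Prop :=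
  forall x y : T, connect e x y.

Definition acyclic (T : finType) (e : rel T) : Prop :=
  ~ (exists s : seq T, [/\ 3 <= size s, uniq s & cycle e s]).

Definition is_tree (T : finType) (e : rel T) : Prop :=
  [/\ simple_graph e, graph_connected e & acyclic e].

Definition induced (T : finType) (e : rel T) (C : {set T}) : rel T :=
  [rel x y | [&& e x y, x \in C & y \in C]].

Definition connected_set (T : finType) (e : rel T) (C : {set T}) : bool :=
  (C != set0) && [forall x in C, forall y in C, connect (induced e C) x y].

Local Open Scope ring_scope.

Definition nRel (R : ringType) (T : finType) (e : rel T) : {poly R} :=
  \sum_(C : {set T} | connected_set e C)
     'X ^+ #|C| * (1 - 'X) ^+ (#|T| - #|C|)%N.

Definition inflection_point (R : realType) (f : {poly R}) (x : R) : Prop :=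
  exists2 eps : R, 0 < eps &
    ((forall y, x - eps < y < x -> (f^`(2)).[y] < 0) /\
     (forall y, x < y < x + eps -> (f^`(2)).[y] > 0)) \/
    ((forall y, x - eps < y < x -> (f^`(2)).[y] > 0) /\
     (forall y, x < y < x + eps -> (f^`(2)).[y] < 0)).

From mathcomp Require Import all_boot all_order all_algebra.
From mathcomp Require Import reals polyorder polyrcf lra zify.
Set Implicit Arguments.
Unset Strict Implicit.
Unset Printing Implicit Defensive.
Import Order.TTheory GRing.Theory Num.Theory.
Local Open Scope ring_scope.

(* P := nRel(T; _) satisfies P(0) = 0 and P(1) = 1, since no connected set
   contributes at 0 and only the whole vertex set contributes at 1. The
   coefficient of p^2 in P is (number of connected 2-sets) - n(n-1) < 0, so
   P'' < 0 near 0. The slope P'(1) is n minus the number of connected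
   (n-1)-sets, i.e. of vertices whose deletion leaves the graph connected; a
   tree on n >= 3 vertices has a cut vertex, so P'(1) >= 1 = P(1) - P(0).
   If P'' were <= 0 on (0,1), the mean value theorem would force P'(1) < 1,
   strictly because the nonzero polynomial P'' has isolated roots. So P'' is
   positive somewhere in (0,1), and between 0 and that point it has a root of
   odd multiplicity, at which it changes sign. *)

(* [inflection_point f x] is [changes_sign_at f^`(2) x] by conversion. *)
Definition changes_sign_at (R : numDomainType) (p : {poly R}) (x : R) : Prop :=
  exists2 eps : R, 0 < eps &
    ((forall y, x - eps < y < x -> p.[y] < 0) /\
     (forall y, x < y < x + eps -> p.[y] > 0)) \/
    ((forall y, x - eps < y < x -> p.[y] > 0) /\
     (forall y, x < y < x + eps -> p.[y] < 0)).

Section RealClosedPoly.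
Variable R : rcfType.
Implicit Types (p : {poly R}) (a b x : R).

Lemma changes_sign_at_odd_mu p x : p != 0 -> odd (\mu_x p) -> changes_sign_at p x.
Proof.
move=> p0 odd_mu.
set l := prev_root p (x - 1) x; set r := next_root p x (x + 1).
have lx : l < x by apply: prev_root_lt; rewrite // gtrBl ltr01.
have xr : x < r by apply: next_root_gt; rewrite // ltrDl ltr01.
have sg_left y : l < y < x -> Num.sg p.[y] = - sgp_right p x.
  by move=> ly; rewrite (@sgr_neighpl _ (x - 1) p x) ?odd_mu ?mulN1r.
have sg_right y : x < y < r -> Num.sg p.[y] = sgp_right p x.
  by move=> yr; rewrite (@sgr_neighpr _ (x + 1) p x) // /neighpr in_itv.
pose eps := Num.min (x - l) (r - x).
have [eps_l eps_r] : eps <= x - l /\ eps <= r - x by rewrite !ge_min !lexx orbT.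
exists eps; first by rewrite lt_min !subr_gt0 lx xr.
have near_left y : x - eps < y < x -> l < y < x.
  by case/andP=> ? ?; apply/andP; split; lra.
have near_right y : x < y < x + eps -> x < y < r.
  by case/andP=> ? ?; apply/andP; split; lra.
have /eqP := @sgp_right_square _ p x p0; rewrite -expr2 sqrf_eq1.
case/orP=> /eqP s; [left | right]; split=> y.
- by move/near_left/sg_left/eqP; rewrite s sgr_cp0.
- by move/near_right/sg_right/eqP; rewrite s sgr_cp0.
- by move/near_left/sg_left/eqP; rewrite s opprK sgr_cp0.
- by move/near_right/sg_right/eqP; rewrite s sgr_cp0.
Qed.

(* Dividing out an even power of ('X - r) keeps the sign change on [a, b]. *)
Lemma poly_ivt_odd_mu p a b : a < b -> p.[a] * p.[b] < 0 ->
  exists2 x, a < x < b & odd (\mu_x p).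
Proof.
move=> ab; have [n] := ubnP (size p); elim: n p => // n IH p.
rewrite ltnS => size_p pab.
have p0 : p != 0 by apply: contraTneq pab => ->; rewrite !horner0 mul0r ltxx.
have [r rab pr0] := poly_ivtoo (ltW ab) pab.
move: rab; rewrite in_itv /= => /andP[ar rb].
have [odd_r|even_r] := boolP (odd (\mu_r p)); first by exists r; rewrite ?ar.
have [q qr0 pq] := mu_spec r p0.
have q0 : q != 0 by apply: contraNneq qr0 => ->; rewrite root0.
have mu_r_gt0 : (0 < \mu_r p)%N by rewrite mu_gt0 // /root pr0.
have size_q : (size q < n)%N.
  move: size_p; rewrite pq size_Mmonic ?monic_exp ?monicXsubC // size_exp_XsubC.
  by rewrite addnS /= => /(leq_trans _); apply; rewrite -addn1 leq_add2l.
have qab : q.[a] * q.[b] < 0.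
  move: pab; rewrite pq !hornerM !horner_exp !hornerXsubC mulrACA -exprMn.
  rewrite pmulr_llt0 // exprn_even_gt0 // mulf_eq0 negb_or !subr_eq0.
  by rewrite (lt_eqF ar) (gt_eqF rb) orbT.
have [x xab odd_x] := IH q size_q qab.
have xr : x != r.
  apply: contraNneq qr0 => <-; rewrite -mu_gt0 //.
  by case: (\mu_x q) odd_x.
have mu_XsubC_x : \mu_x ('X - r%:P) = 0%N by rewrite muNroot // root_XsubC.
by exists x; rewrite // pq mu_mul -?pq // mu_exp mu_XsubC_x addn0.
Qed.

Lemma exists_deriv2_gt0 p a b : a < b -> p^`(2) != 0 ->
  p.[b] - p.[a] <= p^`().[b] * (b - a) ->
  exists2 c, a < c < b & 0 < p^`(2).[c].
Proof.
move=> ab p2N0 secant_le.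
have [c cab mvt_p] := poly_mvt p ab.
move: cab; rewrite in_itv /= => /andP[ac cb].
have [y y_near] := neighpr_wit cb p2N0.
have y_nroot := neighpr_root y_near.
move: (y_near); rewrite /neighpr in_itv /= => /andP[cy y_next].
have yb : y < b.
  apply: lt_le_trans y_next _; move: (next_root_in (p^`(2)) c b).
  by rewrite in_itv /= (max_l (ltW cb)) => /andP[].
have [y_pos|] := ltrP 0 p^`(2).[y]; first by exists y; rewrite ?(lt_trans ac cy).
move=> y_le0; have y_neg : p^`(2).[y] < 0 by rewrite lt_neqAle y_le0 andbT.
have [d dcy mvt_c] := poly_mvt p^`() cy.
have d_neg : p^`(2).[d] < 0.
  rewrite -sgr_cp0 -(sgr_neighpr_same y_near) ?sgr_cp0 //.
  move: dcy; rewrite /neighpr !in_itv /= => /andP[-> dy].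
  exact: lt_trans dy y_next.
have [d' dyb mvt_y] := poly_mvt p^`() yb.
move: dyb; rewrite in_itv /= => /andP[yd' d'b].
have [d'_pos|d'_nonpos] := ltrP 0 p^`(2).[d'].
  by exists d'; rewrite ?d'b ?(lt_trans ac (lt_trans cy yd')).
have yc : p^`().[y] < p^`().[c] by rewrite -subr_lt0 mvt_c pmulr_llt0 ?subr_gt0.
have by_ : p^`().[b] <= p^`().[y] by rewrite -subr_le0 mvt_y pmulr_lle0 ?subr_gt0.
move: secant_le; rewrite mvt_p ler_pM2r ?subr_gt0 // => cb'.
by have := lt_le_trans yc (le_trans cb' by_); rewrite ltxx.
Qed.

End RealClosedPoly.

Section RelTerm.
Variable R : comNzRingType.

Definition rel_term (k m : nat) : {poly R} := 'X ^+ k * (1 - 'X) ^+ m.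

Lemma rel_term_horner0 k m : (0 < k)%N -> (rel_term k m).[0] = 0.
Proof. by case: k => // k _; rewrite /rel_term !hornerE expr0n mul0r. Qed.

Lemma rel_term_horner1 k m : (rel_term k m).[1] = (m == 0)%:R.
Proof. by rewrite /rel_term !hornerE expr1n mul1r subrr expr0n. Qed.

Lemma deriv_rel_term_horner1 k m :
  (rel_term k m)^`().[1] = (m == 0)%:R * k%:R - (m == 1)%:R.
Proof.
rewrite /rel_term derivM derivXn deriv_exp derivB derivC derivX sub0r.
rewrite !(hornerE, hornerMn) !expr1n subrr mul1r mulN1r.
by case: m => [|[|m]]; rewrite ?expr0n /=
  ?(mulr1, mul1r, mulr0, mul0r, oppr0, mul0rn, addr0, add0r, subr0, sub0r).
Qed.

Lemma coef1_1BX_exp m : ((1 - 'X : {poly R}) ^+ m)`_1 = - m%:R.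
Proof.
rewrite -[LHS]mulr1n -coef_deriv -horner_coef0 deriv_exp derivB derivC derivX sub0r.
by rewrite !(hornerE, hornerMn) subr0 expr1n mulr1 mulNrn.
Qed.

Lemma coef2_rel_term k m : (0 < k)%N ->
  (rel_term k m)`_2 = (k == 2)%:R - (k == 1)%:R * m%:R.
Proof.
rewrite /rel_term coefXnM; case: k => [|[|[|k]]] //= _.
- by rewrite coef1_1BX_exp mul1r sub0r.
- by rewrite -horner_coef0 !hornerE subr0 expr1n.
- by rewrite mul0r subr0.
Qed.

End RelTerm.

Lemma connect_first_step (T : finType) (r : rel T) x y :
  connect r x y -> x != y -> exists w, r x w.
Proof.
case/connectP=> [[/= _ ->|w p /= /andP[rxw _] _ _]]; [by rewrite eqxx | by exists w].
Qed.

Section ConnectedSets.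
Variables (T : finType) (e : rel T).
Implicit Types (C : {set T}) (x : T).

Lemma connected_set_card_gt0 C : connected_set e C -> (0 < #|C|)%N.
Proof. by case/andP; rewrite card_gt0. Qed.

Lemma connected_set1 x : connected_set e [set x].
Proof.
apply/andP; split; first by apply/set0Pn; exists x; rewrite inE.
by apply/forall_inP => u /set1P->; apply/forall_inP => v /set1P->; apply: connect0.
Qed.

Lemma connected_setT : graph_connected e -> (0 < #|T|)%N -> connected_set e setT.
Proof.
move=> conn_e /card_gt0P[x _]; apply/andP; split; first by apply/set0Pn; exists x.
apply/forall_inP => y _; apply/forall_inP => z _.
by rewrite (@eq_connect _ _ e) // => u v; rewrite /induced /= !in_setT !andbT.
Qed.

Lemma card_connected_sets1 : #|[set C | connected_set e C & #|C| == 1%N]| = #|T|.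
Proof.
rewrite -[RHS]bin1 -card_draws; apply: eq_card => C; rewrite !inE andb_idl //.
by case/cards1P=> x ->; apply: connected_set1.
Qed.

Lemma card_connected_setsC1_lt : (exists v, ~~ connected_set e [set~ v]) ->
  (#|[set C | connected_set e C & #|C| == #|T|.-1]| < #|T|)%N.
Proof.
case=> v not_conn_v.
have n_gt0 : (0 < #|T|)%N by apply/card_gt0P; exists v.
have card_C1 : #|[set C : {set T} | #|C| == #|T|.-1]| = #|T|.
  by rewrite card_draws; case: #|T| n_gt0 => // n _; rewrite binSn.
rewrite -[X in (_ < X)%N]card_C1; apply/proper_card/properP; split.
  by apply/subsetP => C; rewrite !inE => /andP[_ ->].
by exists [set~ v]; rewrite !inE ?(negPf not_conn_v) // cardsC1.
Qed.

Lemma induced_path C x s :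
  path (induced e C) x s -> path e x s /\ all (mem C) s.
Proof.
elim: s x => [//|y s IH] x /= /andP[/and3P[exy _ yC] /IH[e_s C_s]].
by rewrite exy yC e_s C_s.
Qed.

(* Otherwise take an edge x b and a neighbour w <> x of b (first step of a
   path from b avoiding x); a path from x to w avoiding b closes a cycle. *)
Lemma tree_cut_vertex : is_tree e -> (2 < #|T|)%N ->
  exists v, ~~ connected_set e [set~ v].
Proof.
case=> [[e_sym e_irr] conn_e acyc_e] n_gt2.
apply/existsP; rewrite -negb_forall; apply/negP => /forallP all_conn.
have avoid v x y : x != v -> y != v -> connect (induced e [set~ v]) x y.
  move=> xv yv; have /andP[_ /forall_inP/(_ x)] := all_conn v.
  by rewrite !inE xv => /(_ isT)/forall_inP/(_ y); rewrite !inE yv; apply.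
have [x [y [z [_ [xy yz zx]]]]] := card_gt2P n_gt2.
have [b exb] := connect_first_step (conn_e x y) xy.
have bx : b != x by apply: contraTneq exb => ->; rewrite e_irr.
have xb : x != b by rewrite eq_sym.
have [c cx bc] : exists2 c, c != x & b != c.
  have [->|b_y] := eqVneq b y; first by exists z.
  by exists y; rewrite // eq_sym.
have [w /and3P[ebw _ w_x]] := connect_first_step (avoid x b c bx cx) bc.
have wx : w != x by move: w_x; rewrite !inE.
have wb : w != b by apply: contraTneq ebw => ->; rewrite e_irr.
case/connectP: (avoid b x w xb wb) => p p_path p_last.
case/shortenP: p_path p_last => q q_path q_uniq _ q_last.
have [e_q q_b] := induced_path q_path.
apply: acyc_e; exists [:: b, x & q]; split.
- by case: q q_last {q_path q_uniq e_q q_b} => [/= wx'|//]; rewrite wx' eqxx in wx.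
- rewrite [uniq _]/= -[_ && uniq q]/(uniq (x :: q)) q_uniq andbT inE negb_or bx /=.
  by apply/negP => /(allP q_b); rewrite !inE eqxx.
- by rewrite /cycle /= rcons_path e_sym exb e_q -q_last e_sym.
Qed.

End ConnectedSets.

Lemma subn_eq1 m n : (0 < n)%N -> (m <= n)%N -> (n - m == 1)%N = (m == n.-1).
Proof. by rewrite -subn1 => n_gt0 le_mn; apply/eqP/eqP => ?; lia. Qed.

Lemma sumr_indicator (R : nzSemiRingType) (I : finType) (P Q : pred I) :
  \sum_(i | P i) (Q i)%:R = #|[set i | P i & Q i]|%:R :> R.
Proof.
rewrite -sum1dep_card natr_sum big_mkcondr /=; apply: eq_bigr => i _.
by case: (Q i).
Qed.

Section NodeReliability.
Variables (T : finType) (e : rel T).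

Lemma nRelE (R : comNzRingType) :
  nRel R e = \sum_(C | connected_set e C) rel_term R #|C| (#|T| - #|C|).
Proof. by []. Qed.

Lemma card_lt_setT (C : {set T}) : C != setT -> (#|C| < #|T|)%N.
Proof. by rewrite -cardsT -properT; apply: proper_card. Qed.

Lemma nRel_horner0 (R : comNzRingType) : (nRel R e).[0] = 0.
Proof.
rewrite nRelE horner_sum big1 // => C /connected_set_card_gt0.
exact: rel_term_horner0.
Qed.

Lemma nRel_horner1 (R : comNzRingType) :
  graph_connected e -> (0 < #|T|)%N -> (nRel R e).[1] = 1.
Proof.
move=> conn_e n_gt0.
rewrite nRelE horner_sum (bigD1 setT) ?connected_setT //= rel_term_horner1.
rewrite cardsT subnn big1 ?addr0 // => C /andP[_ /card_lt_setT C_lt].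
by rewrite rel_term_horner1 subn_eq0 leqNgt C_lt.
Qed.

Lemma deriv_nRel_horner1 (R : comNzRingType) :
  graph_connected e -> (0 < #|T|)%N ->
  (nRel R e)^`().[1] =
    #|T|%:R - #|[set C | connected_set e C & #|C| == #|T|.-1]|%:R.
Proof.
move=> conn_e n_gt0.
rewrite nRelE raddf_sum horner_sum.
under eq_bigr do rewrite deriv_rel_term_horner1.
rewrite sumrB (bigD1 setT) ?connected_setT //= cardsT subnn mul1r.
rewrite big1 ?addr0 => [|C /andP[_ /card_lt_setT C_lt]]; last first.
  by rewrite subn_eq0 leqNgt C_lt mul0r.
rewrite sumr_indicator; congr (_ - _%:R); apply: eq_card => C; rewrite !inE.
by case: connected_set; rewrite //= subn_eq1 // max_card.
Qed.

Lemma coef2_nRel (R : comNzRingType) :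
  (nRel R e)`_2 =
    #|[set C | connected_set e C & #|C| == 2]|%:R - (#|T| * #|T|.-1)%:R.
Proof.
rewrite nRelE coef_sum.
under eq_bigr => C /connected_set_card_gt0 C_gt0 do rewrite coef2_rel_term //.
have one_term (C : {set T}) : ((#|C| == 1)%:R * (#|T| - #|C|)%:R : R) =
                  (#|C| == 1)%:R * #|T|.-1%:R.
  by case: eqP => [->|_]; rewrite ?subn1 ?mul0r.
rewrite sumrB sumr_indicator (eq_bigr _ (fun C _ => one_term C)) -mulr_suml.
by rewrite sumr_indicator card_connected_sets1 natrM.
Qed.

Lemma nRel_deriv2_horner0_lt0 (R : numDomainType) :
  (1 < #|T|)%N -> (nRel R e)^`(2).[0] < 0.
Proof.
move=> n_gt1; rewrite horner_coef0 coef_derivn addn0 pmulrn_llt0 //.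
rewrite coef2_nRel subr_lt0 ltr_nat.
apply: (@leq_ltn_trans 'C(#|T|, 2)).
  rewrite -card_draws; apply/subset_leq_card/subsetP => C.
  by rewrite !inE => /andP[].
rewrite bin2 ltn_half_double -addnn; nia.
Qed.

Lemma tree_deriv_nRel_horner1_ge1 (R : numDomainType) :
  is_tree e -> (2 < #|T|)%N -> 1 <= (nRel R e)^`().[1].
Proof.
move=> tree_e n_gt2; have [_ conn_e _] := tree_e.
rewrite deriv_nRel_horner1 ?(ltn_trans _ n_gt2) // lerBrDr addrC natr1 ler_nat.
exact/card_connected_setsC1_lt/tree_cut_vertex.
Qed.

End NodeReliability.

Theorem theorem3p2 (R : realType) (T : finType) (e : rel T) :
  is_tree e -> (4 <= #|T|)%N ->
  exists2 x : R, 0 < x < 1 & inflection_point (nRel R e) x.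
Proof.
move=> tree_e n_ge4; have [_ conn_e _] := tree_e.
have n_gt2 : (2 < #|T|)%N by apply: leq_trans n_ge4.
set P := nRel R e.
have P2_0 : P^`(2).[0] < 0 by apply/nRel_deriv2_horner0_lt0/ltnW.
have P2_neq0 : P^`(2) != 0 by apply: contraTneq P2_0 => ->; rewrite horner0 ltxx.
have secant : P.[1] - P.[0] <= P^`().[1] * (1 - 0).
  rewrite nRel_horner1 ?nRel_horner0 ?(ltn_trans _ n_gt2) // !subr0 mulr1.
  exact: tree_deriv_nRel_horner1_ge1.
have [b /andP[b_gt0 b_lt1] P2_b] := exists_deriv2_gt0 ltr01 P2_neq0 secant.
have P2_0b : P^`(2).[0] * P^`(2).[b] < 0 by rewrite nmulr_rlt0.
have [x /andP[x_gt0 x_ltb] odd_x] := poly_ivt_odd_mu b_gt0 P2_0b.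
exists x; first by rewrite x_gt0 (lt_trans x_ltb b_lt1).
exact: changes_sign_at_odd_mu.
Qed.
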